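(* Let $a,b,c$ be nonnegative integers with $a+b+c=n$ and suppose $\gcd(a+b,b+c)=1$. Then in the meander graph $M=M(a,b,c\mid n)$ there are exactly two vertices of degree $1$, and every other vertex has degree $2$.
   Context: For compositions $\underline x=(a_1,\ldots,a_m)$, $\underline y=(b_1,\ldots,b_t)$ of $n$ (nonnegative integers summing to $n$), the meander $M(\underline x\mid\underline y)$ is the graph on vertices $1,\ldots,n$ whose edges are: for each part $a_k$ with $s=a_1+\cdots+a_{k-1}$, the top edges $\{s+j,\,s+a_k+1-j\}$ for $1\le j\le\lfloor a_k/2\rfloor$; and for each part $b_k$ with $s=b_1+\cdots+b_{k-1}$, the bottom edges $\{s+j,\,s+b_k+1-j\}$ for $1\le j\le\lfloor b_k/2\rfloor$. Here $\underline x=(a,b,c)$ and $\underline y=(n)$. *)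

From mathcomp Require Import all_boot.
Set Implicit Arguments. Unset Strict Implicit. Unset Printing Implicit Defensive.

Definition part_edges (s a : nat) : seq (nat * nat) :=
  [seq (s + j, s + a + 1 - j) | j <- iota 1 a./2].

Fixpoint comp_edges (s : nat) (x : seq nat) : seq (nat * nat) :=
  match x with
  | [::] => [::]
  | a :: x' => part_edges s a ++ comp_edges (s + a) x'
  end.

(* The meander M(x | y) as a (multi)list of edges on vertices 1..n:
   top edges from x, bottom edges from y. *)
Definition meander (x y : seq nat) : seq (nat * nat) :=
  comp_edges 0 x ++ comp_edges 0 y.

Definition degree (E : seq (nat * nat)) (v : nat) : nat :=
  count (fun e => e.1 == v) E + count (fun e => e.2 == v) E.

(* Within one part every vertex is an endpoint of exactly one arc, except the
   center of an odd part, which is an endpoint of none.  Hence a vertex of M has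
   degree 2 minus the number of odd parts (top or bottom) it is the center of.
   Coprimality of a + b and b + c forces exactly two of a, b, c, n to be odd, and
   the only ways a top center could coincide with the bottom center (an isolated
   vertex) are a + b = 0, b + c = 0 or a = c, each of which forces n = 1. *)

From mathcomp Require Import all_boot zify.

Set Implicit Arguments.
Unset Strict Implicit.
Unset Printing Implicit Defensive.

Definition part_center (s a : nat) : nat := s + a./2 + 1.

Fixpoint odd_centers (s : nat) (x : seq nat) : seq nat :=
  match x with
  | [::] => [::]
  | a :: x' => (if odd a then [:: part_center s a] else [::]) ++ odd_centers (s + a) x'
  end.

Lemma degree_cat E1 E2 v : degree (E1 ++ E2) v = degree E1 v + degree E2 v.
Proof. by rewrite /degree !count_cat addnACA. Qed.

Lemma count_iota1_pred1 (P : pred nat) t k :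
  {in iota 1 k, P =1 pred1 t} -> count P (iota 1 k) = (0 < t <= k).
Proof.
move=> PE; rewrite (eq_in_count PE) count_uniq_mem ?iota_uniq // mem_iota.
by case: t {PE} => [|t] //=; rewrite add1n.
Qed.

Lemma degree_part_edges s a v :
  degree (part_edges s a) v = (s < v <= s + a) && ~~ (odd a && (v == part_center s a)).
Proof.
have lower : count (fun e => e.1 == v) (part_edges s a) = (s < v <= s + a./2).
  rewrite count_map (@count_iota1_pred1 _ (v - s)); first by lia.
  by move=> j; rewrite mem_iota => Hj /=; apply/eqP/eqP; lia.
have upper : count (fun e => e.2 == v) (part_edges s a) = (s + a - a./2 < v <= s + a).
  rewrite count_map (@count_iota1_pred1 _ (s + a + 1 - v)); first by lia.
  by move=> j; rewrite mem_iota => Hj /=; apply/eqP/eqP; lia.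
rewrite /degree lower upper /part_center.
have := odd_double_half a; case: (odd a) => /= a_eq.
  by case: (v =P s + a./2 + 1) => /=; lia.
by rewrite andbT; lia.
Qed.

Lemma part_center_range s a : odd a -> s < part_center s a <= s + a.
Proof. by move=> odd_a; move: (odd_double_half a); rewrite odd_a /part_center; lia. Qed.

Lemma odd_centers_range s x v : v \in odd_centers s x -> s < v <= s + sumn x.
Proof.
elim: x s => [|a x IHx] s //=; rewrite mem_cat.
case/orP => [|/IHx]; last by lia.
by case: ifP => // odd_a; rewrite inE => /eqP ->; have := part_center_range s odd_a; lia.
Qed.

Lemma odd_centers_uniq s x : uniq (odd_centers s x).
Proof.
elim: x s => [|a x IHx] s //=; rewrite cat_uniq IHx andbT.
case: ifP => [odd_a|_]; last by rewrite /= has_pred0.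
apply/hasPn => v /odd_centers_range; rewrite inE.
by have := part_center_range s odd_a; case: (v =P _) => [->|]; lia.
Qed.

Lemma size_odd_centers s x : size (odd_centers s x) = count odd x.
Proof. by elim: x s => [|a x IHx] s //=; rewrite size_cat IHx; case: (odd a). Qed.

Lemma degree_comp_edges s x v :
  degree (comp_edges s x) v = (s < v <= s + sumn x) && (v \notin odd_centers s x).
Proof.
elim: x s => [|a x IHx] s /=; first by rewrite /degree /= addn0; lia.
rewrite degree_cat degree_part_edges IHx mem_cat negb_or.
have [/odd_centers_range|notin_x] := boolP (v \in odd_centers (s + a) x).
  by case: (odd a && (v == part_center s a)); lia.
rewrite !andbT; case: ifP => odd_a /=; last by lia.
have := part_center_range s odd_a.
by case: (v =P part_center s a) => [->|/eqP v_ne]; rewrite ?mem_seq1 ?eqxx ?v_ne /=; lia.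
Qed.

Lemma count_mem_uniq_subset (T : eqType) (s t : seq T) :
  uniq s -> uniq t -> {subset s <= t} -> count (mem s) t = size s.
Proof.
move=> s_uniq t_uniq s_t; rewrite -size_filter; apply: perm_size.
apply: uniq_perm => [||v]; rewrite ?filter_uniq // mem_filter.
by apply/andP/idP => [[]|vs] //; split; last exact: s_t.
Qed.

Section MeanderDegrees.

Variables (x y : seq nat) (n : nat).
Hypotheses (sum_x : sumn x = n) (sum_y : sumn y = n).
Hypothesis centers_disjoint : {in odd_centers 0 x, forall v, v \notin odd_centers 0 y}.

Lemma degree_meander v : 0 < v <= n ->
  degree (meander x y) v = (v \notin odd_centers 0 x) + (v \notin odd_centers 0 y).
Proof.
by move=> v_range; rewrite degree_cat !degree_comp_edges /= sum_x sum_y v_range.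
Qed.

Lemma meander_degree_eq1 v : 0 < v <= n ->
  (degree (meander x y) v == 1) = (v \in odd_centers 0 x ++ odd_centers 0 y).
Proof.
move=> v_range; rewrite degree_meander // mem_cat.
have := @centers_disjoint v.
by case: (v \in odd_centers 0 x); case: (v \in odd_centers 0 y) => // /(_ isT).
Qed.

Lemma meander_degree_neq1 v : 0 < v <= n ->
  degree (meander x y) v != 1 -> degree (meander x y) v = 2.
Proof.
move=> v_range; rewrite meander_degree_eq1 // degree_meander // mem_cat negb_or.
by case/andP=> /negbTE -> /negbTE ->.
Qed.

Lemma count_meander_degree_eq1 :
  count (fun v => degree (meander x y) v == 1) (iota 1 n) = count odd x + count odd y.
Proof.
rewrite (@eq_in_count _ _ (mem (odd_centers 0 x ++ odd_centers 0 y))); last first.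
  by move=> v; rewrite mem_iota add1n ltnS => /meander_degree_eq1.
rewrite count_mem_uniq_subset ?iota_uniq ?size_cat ?size_odd_centers //.
  rewrite cat_uniq !odd_centers_uniq andbT /=; apply/hasPn => v v_y.
  by apply/negP => /centers_disjoint; rewrite v_y.
move=> v; rewrite mem_cat mem_iota add1n ltnS.
by case/orP => /odd_centers_range; rewrite ?sum_x ?sum_y.
Qed.

End MeanderDegrees.

Lemma coprime_sums_odd_parts a b c :
  gcdn (a + b) (b + c) = 1 -> odd a + odd b + odd c + odd (a + b + c) = 2.
Proof.
move=> coprime_ab_bc; have : ~~ (2 %| gcdn (a + b) (b + c)) by rewrite coprime_ab_bc.
by rewrite dvdn_gcd !dvdn2 !oddD; case: (odd a); case: (odd b); case: (odd c).
Qed.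

Lemma three_part_centers_disjoint a b c :
  1 < a + b + c -> gcdn (a + b) (b + c) = 1 ->
  {in odd_centers 0 [:: a; b; c], forall v, v \notin odd_centers 0 [:: a + b + c]}.
Proof.
move=> n_gt1 coprime_ab_bc.
have bc_of_ab0 : a + b = 0 -> b + c = 1 by move=> ab0; rewrite ab0 gcd0n in coprime_ab_bc.
have ab_of_bc0 : b + c = 0 -> a + b = 1 by move=> bc0; rewrite bc0 gcdn0 in coprime_ab_bc.
have ab_of_ac : a = c -> a + b = 1.
  by move=> ac; rewrite -ac [b + a]addnC gcdnn in coprime_ab_bc.
have := coprime_sums_odd_parts coprime_ab_bc.
move: (odd_double_half a) (odd_double_half b) (odd_double_half c) (odd_double_half (a + b + c)).
rewrite /= !oddD.
case: (odd a); case: (odd b); case: (odd c) => //= a_eq b_eq c_eq n_eq _ v;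
  by rewrite ?inE => /eqP ->; rewrite /part_center; lia.
Qed.

Theorem lemma4p11 (a b c n : nat) :
  a + b + c = n -> 1 < n -> gcdn (a + b) (b + c) = 1 ->
  count (fun v => degree (meander [:: a; b; c] [:: n]) v == 1) (iota 1 n) = 2 /\
  (forall v, 1 <= v <= n ->
     degree (meander [:: a; b; c] [:: n]) v != 1 ->
     degree (meander [:: a; b; c] [:: n]) v = 2).
Proof.
move=> <- n_gt1 coprime_ab_bc.
have sum_x : sumn [:: a; b; c] = a + b + c by rewrite /= addn0 addnA.
have sum_y : sumn [:: a + b + c] = a + b + c by rewrite /= addn0.
have disjoint := three_part_centers_disjoint n_gt1 coprime_ab_bc.
split; last exact: meander_degree_neq1 sum_x sum_y disjoint.
rewrite (count_meander_degree_eq1 sum_x sum_y disjoint) /= !addn0 addnA.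
exact: coprime_sums_odd_parts.
Qed.
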